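(* Let $q$ be a prime power with $q\equiv2\pmod 3$, let $m,n$ be positive integers, let $\omega\in\mathbb{F}_{q^2}$ be an element of multiplicative order $3$, and let $\varepsilon\in\mathbb{F}_q^*\cup\{\pm\omega,\pm\omega^2\}$. Put $f(x)=(x+\omega x^q)^m+\varepsilon(\omega x+x^q)^n$. Then: (i) if $\varepsilon\in\mathbb{F}_q^*$, $f$ permutes $\mathbb{F}_{q^2}$ if and only if $\gcd(mn,q-1)=1$ and $3\nmid(m-n)$; (ii) if $\varepsilon=\pm\omega$, $f$ permutes $\mathbb{F}_{q^2}$ if and only if $\gcd(mn,q-1)=1$ and $3\nmid(1+m-n)$; (iii) if $\varepsilon=\pm\omega^2$, $f$ permutes $\mathbb{F}_{q^2}$ if and only if $\gcd(mn,q-1)=1$ and $3\nmid(2+m-n)$.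
   Context: $f$ permutes $\mathbb{F}_{q^2}$ means the map $x\mapsto f(x)$ on $\mathbb{F}_{q^2}$ is bijective. *)

From HB Require Import structures.
From mathcomp Require Import all_boot all_order all_algebra all_field.
Set Implicit Arguments. Unset Strict Implicit. Unset Printing Implicit Defensive.
Import GRing.Theory.
Local Open Scope ring_scope.

Definition prime_power (q : nat) : Prop :=
  exists p k : nat, [/\ prime p, (0 < k)%N & q = (p ^ k)%N].

Definition fmap (F : fieldType) (q m n : nat) (w eps : F) (x : F) : F :=
  (x + w * x ^+ q) ^+ m + eps * (w * x + x ^+ q) ^+ n.

Definition permutes (F : Type) (f : F -> F) : Prop := bijective f.

From HB Require Import structures.
From mathcomp Require Import all_boot all_order all_algebra all_field.
From mathcomp Require Import all_fingroup all_solvable.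
From mathcomp Require Import zify ring.
Import GRing.Theory FinRing.Theory.
Local Open Scope ring_scope.

(** Let [Tr u = u + u^q] be the trace from F_{q^2} to F_q. Since [w^q = w^2],
    [x + w x^q = w^2 Tr (w x)] and [w x + x^q = w^2 Tr (w^2 x)], and
    [x |-> (Tr (w x), Tr (w^2 x))] is an F_q-linear bijection from F_{q^2} onto
    F_q^2. Hence [f = w^(2m) g] with [g x = A^m + c B^n], [c = eps w^(m+2n)]
    and [(A, B) = (Tr (w x), Tr (w^2 x))] ranging over F_q^2. Such a [g] is
    injective iff [A |-> A^m] and [B |-> B^n] are injective on F_q, that is
    [gcd(mn, q-1) = 1], and [c] is not in F_q: if [c] is in F_q then [g] only
    takes values in F_q, and a collision [A^m + c B^n = A'^m + c B'^n] with
    [B^n <> B'^n] exhibits [c] as a quotient of elements of F_q. Finally,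
    writing [eps = s w^j] with [s] in F_q^* and [j] in [{0, 1, 2}], we get
    [c = s w^(j+m+2n)], which lies in F_q iff [3 | j + m + 2n]. *)

Definition fixed {R : pzRingType} (q : nat) : {pred R} :=
  [pred k : R | k ^+ q == k].

Lemma fixedE {R : pzRingType} (q : nat) (k : R) : (k \in fixed q) = (k ^+ q == k).
Proof. by []. Qed.

Lemma fixed_expr_period {R : pzRingType} (q v : nat) (k : R) :
  (0 < q)%N -> k \in fixed q -> k ^+ (v * (q - 1)).+1 = k.
Proof.
move=> q_gt0; rewrite fixedE => /eqP kq.
elim: v => [|v IHv]; first by rewrite expr1.
by rewrite mulSn -addnS exprD IHv -exprSr subn1 prednK.
Qed.

Lemma coprime_fixed_expr_inj {R : pzRingType} (q m : nat) :
  (0 < q)%N -> (0 < m)%N -> coprime m (q - 1) ->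
  {in fixed q &, injective (fun k : R => k ^+ m)}.
Proof.
move=> q_gt0 m_gt0 /eqP co_m k l kq lq /= klm.
have [u v Bezout _] := egcdnP (q - 1) m_gt0; rewrite co_m in Bezout.
by rewrite -(fixed_expr_period _ v _ q_gt0 kq) -(fixed_expr_period _ v _ q_gt0 lq)
  -addn1 -Bezout mulnC !exprM klm.
Qed.

(* An element of prime order [p | gcd(m, q-1)] is fixed by [x |-> x^q] and
   has the same [m]-th power as [1]. *)
Lemma fixed_expr_inj_coprime (F : finFieldType) (q m : nat) :
  (1 < q)%N -> (q - 1 %| #|F|.-1)%N ->
  {in fixed q &, injective (fun k : F => k ^+ m)} -> coprime m (q - 1).
Proof.
move=> q_gt1 dvd_q1 inj_m; apply: contraT => not_co.
have gcd_gt1 : (1 < gcdn m (q - 1))%N.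
  by rewrite ltn_neqAle eq_sym not_co gcdn_gt0 subn_gt0 q_gt1 orbT.
set p := pdiv (gcdn m (q - 1)).
have p_pr : prime p := pdiv_prime gcd_gt1.
have dvd_pm : (p %| m)%N := dvdn_trans (pdiv_dvd _) (dvdn_gcdl _ _).
have dvd_pq : (p %| q - 1)%N := dvdn_trans (pdiv_dvd _) (dvdn_gcdr _ _).
have [|g _ ord_g] := Cauchy p_pr (_ : p %| #|[set: {unit F}]%G|)%N.
  by rewrite card_finField_unit (dvdn_trans dvd_pq).
have gX j : (p %| j)%N -> val g ^+ j = 1.
  by rewrite -ord_g order_dvdn -val_unitX => /eqP ->.
have g_fixed : val g \in fixed q.
  by rewrite fixedE -(subnK (ltnW q_gt1)) exprD gX // mul1r.
have /eqP : val g = 1.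
  by apply: inj_m => //=; [rewrite fixedE expr1n | rewrite expr1n gX].
by rewrite -val_unit1 (inj_eq val_inj) -order_eq1 ord_g (gtn_eqF (prime_gt1 p_pr)).
Qed.

Section FrobeniusTrace.
Context {F : fieldType} (q : nat).
Hypothesis frobD : forall x y : F, (x + y) ^+ q = x ^+ q + y ^+ q.
Hypothesis frobK : forall x : F, x ^+ q ^+ q = x.

Lemma frob0 : (0 : F) ^+ q = 0.
Proof. by apply: (addrI (0 ^+ q)); rewrite -frobD !addr0. Qed.

Lemma frobB (x y : F) : (x - y) ^+ q = x ^+ q - y ^+ q.
Proof.
have frobN (z : F) : (- z) ^+ q = - z ^+ q.
  by apply: (addrI (z ^+ q)); rewrite -frobD !subrr frob0.
by rewrite frobD frobN.
Qed.

Lemma fixed_divring_closed : divring_closed (@fixed F q).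
Proof.
split=> [|x y|x y]; rewrite !fixedE ?expr1n // => /eqP xq /eqP yq.
  by rewrite frobB xq yq.
by rewrite exprMn exprVn xq yq.
Qed.

HB.instance Definition _ := GRing.isDivringClosed.Build F (fixed q)
  fixed_divring_closed.

Definition tr (u : F) : F := u + u ^+ q.

Lemma tr_fixed (u : F) : tr u \in fixed q.
Proof. by rewrite fixedE frobD frobK addrC. Qed.

Lemma trZ (k u : F) : k \in fixed q -> tr (k * u) = k * tr u.
Proof. by rewrite fixedE => /eqP kq; rewrite /tr exprMn kq mulrDr. Qed.

Variable w : F.
Hypotheses (wq : w ^+ q = w ^+ 2) (w_prim : 3.-primitive_root w).

Let w3 : w ^+ 3 = 1 := prim_expr_order w_prim.
Let w4 : w ^+ 4 = w := esym (prim_expr_mod w_prim 4).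
Let w_neq0 : w != 0. Proof. by rewrite (prim_root_eq0 w_prim). Qed.

Lemma mul_wexpr_fixed (s : F) (e : nat) :
  s \in fixed q -> s != 0 -> (s * w ^+ e \in fixed q) = (3 %| e)%N.
Proof.
rewrite !fixedE => /eqP sq s_neq0.
rewrite exprMn sq exprAC wq exprAC expr2 (inj_eq (mulfI s_neq0)).
rewrite -[X in _ == X]mulr1 (inj_eq (mulfI (expf_neq0 _ w_neq0))).
by rewrite -(prim_order_dvd w_prim).
Qed.

Definition tr1 (x : F) : F := tr (w * x).
Definition tr2 (x : F) : F := tr (w ^+ 2 * x).

Lemma tr1E (x : F) : tr1 x = w * x + w ^+ 2 * x ^+ q.
Proof. by rewrite /tr1 /tr exprMn wq. Qed.

Lemma tr2E (x : F) : tr2 x = w ^+ 2 * x + w * x ^+ q.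
Proof. by rewrite /tr2 /tr exprMn exprAC wq -exprM w4. Qed.

Lemma tr1Z (k x : F) : k \in fixed q -> tr1 (k * x) = k * tr1 x.
Proof. by move=> kq; rewrite /tr1 mulrCA (trZ _ _ kq). Qed.

Lemma tr2Z (k x : F) : k \in fixed q -> tr2 (k * x) = k * tr2 x.
Proof. by move=> kq; rewrite /tr2 mulrCA (trZ _ _ kq). Qed.

Lemma tr1_tr2_inj (x y : F) : tr1 x = tr1 y -> tr2 x = tr2 y -> x = y.
Proof.
have tr12E z : (w - 1) * z = tr1 z - w * tr2 z.
  rewrite tr1E tr2E; transitivity (w * z - w ^+ 3 * z); first by rewrite w3; ring.
  ring.
have w1_neq0 : w - 1 != 0.
  by rewrite subr_eq0 -[w]expr1 -(prim_order_dvd w_prim).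
by move=> eq1 eq2; apply: (mulfI w1_neq0); rewrite !tr12E eq1 eq2.
Qed.

Lemma fmapE (m n : nat) (eps x : F) :
  fmap q m n w eps x =
  (w ^+ 2) ^+ m * (tr1 x ^+ m + eps * w ^+ (m + 2 * n) * tr2 x ^+ n).
Proof.
have e1 : x + w * x ^+ q = w ^+ 2 * tr1 x.
  rewrite tr1E; transitivity (w ^+ 3 * x + w ^+ 4 * x ^+ q); last ring.
  by rewrite w3 w4 mul1r.
have e2 : w * x + x ^+ q = w ^+ 2 * tr2 x.
  rewrite tr2E; transitivity (w ^+ 4 * x + w ^+ 3 * x ^+ q); last ring.
  by rewrite w3 w4 mul1r.
have ew : (w ^+ 2) ^+ m * w ^+ (m + 2 * n) = (w ^+ 2) ^+ n.
  by rewrite -!exprM -exprD addnA -mulSnr exprD exprM w3 expr1n mul1r.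
by rewrite /fmap e1 e2 [(_ * tr1 x) ^+ m]exprMn [(_ * tr2 x) ^+ n]exprMn -ew; ring.
Qed.

Definition trsum (m n : nat) (c x : F) : F := tr1 x ^+ m + c * tr2 x ^+ n.

Lemma trsum_fixed (m n : nat) (c x : F) :
  c \in fixed q -> trsum m n c x \in fixed q.
Proof. by move=> cq; rewrite rpredD ?rpredM ?rpredX ?tr_fixed. Qed.

(* [tr2] vanishes at [u = 1 - w^2], so [trsum (k * u) = k^m * tr1 u ^+ m]
   for [k] in [fixed q]. *)
Lemma trsum_inj_exprl (m n : nat) (c : F) : (0 < n)%N ->
  injective (trsum m n c) -> {in fixed q &, injective (fun k : F => k ^+ m)}.
Proof.
move=> n_gt0 inj_g k l kq lq /= klm; set u := 1 - w ^+ 2.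
have u_neq0 : u != 0 by rewrite subr_eq0 eq_sym -(prim_order_dvd w_prim).
have tr2u : tr2 u = 0.
  rewrite tr2E /u frobB expr1n exprAC wq -exprM w4.
  by transitivity (w - w ^+ 4); [ring | rewrite w4 subrr].
apply: (mulIf u_neq0); apply: inj_g.
by rewrite /trsum !tr1Z // !tr2Z // tr2u !mulr0 expr0n (gtn_eqF n_gt0) !exprMn klm.
Qed.

Lemma trsum_inj_exprr (m n : nat) (c : F) : (0 < m)%N ->
  injective (trsum m n c) -> {in fixed q &, injective (fun k : F => k ^+ n)}.
Proof.
move=> m_gt0 inj_g k l kq lq /= kln; set v := 1 - w.
have v_neq0 : v != 0 by rewrite subr_eq0 eq_sym -[w]expr1 -(prim_order_dvd w_prim).
have tr1v : tr1 v = 0.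
  rewrite tr1E /v frobB expr1n wq.
  by transitivity (w - w ^+ 4); [ring | rewrite w4 subrr].
apply: (mulIf v_neq0); apply: inj_g.
by rewrite /trsum !tr1Z // !tr2Z // tr1v !mulr0 expr0n (gtn_eqF m_gt0) !exprMn kln.
Qed.

Lemma trsum_inj (m n : nat) (c : F) : c \notin fixed q ->
  {in fixed q &, injective (fun k : F => k ^+ m)} ->
  {in fixed q &, injective (fun k : F => k ^+ n)} -> injective (trsum m n c).
Proof.
move=> c_notq inj_m inj_n x y gxy.
have eqB : tr2 x ^+ n = tr2 y ^+ n.
  apply: contraNeq c_notq => neqB.
  have dB : tr2 x ^+ n - tr2 y ^+ n != 0 by rewrite subr_eq0.
  rewrite -[c](mulfK dB).
  have -> : c * (tr2 x ^+ n - tr2 y ^+ n) = tr1 y ^+ m - tr1 x ^+ m.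
    transitivity (trsum m n c x - trsum m n c y + (tr1 y ^+ m - tr1 x ^+ m)).
      by rewrite /trsum; ring.
    by rewrite gxy subrr add0r.
  by rewrite rpred_div ?rpredB ?rpredX ?tr_fixed.
have eqA : tr1 x ^+ m = tr1 y ^+ m by move: gxy; rewrite /trsum eqB => /addIr.
by apply: tr1_tr2_inj; [apply: inj_m | apply: inj_n]; rewrite ?tr_fixed.
Qed.

End FrobeniusTrace.

Section FiniteField.
Variables (F : finFieldType) (q : nat) (w : F).
Hypotheses (q_pp : prime_power q) (cardF : #|F| = (q ^ 2)%N).
Hypotheses (q_mod3 : (q %% 3 = 2)%N) (w_prim : 3.-primitive_root w).

Let q_gt1 : (1 < q)%N.
Proof.
by case: q_pp => p [k [p_pr k_gt0 ->]]; rewrite -(expn0 p) ltn_exp2l ?prime_gt1.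
Qed.

Lemma frobqD (x y : F) : (x + y) ^+ q = x ^+ q + y ^+ q.
Proof.
case: q_pp => p [k [p_pr _ qE]].
have charF : p \in [pchar F].
  by apply: (card_finPcharP (n := (k * 2)%N)); rewrite // cardF qE -expnM.
by apply: exprDn_pchar; rewrite qE pnatX pnatE // charF.
Qed.

Lemma frobqK (x : F) : x ^+ q ^+ q = x.
Proof. by rewrite -exprM mulnn -cardF expf_card. Qed.

Lemma prim3_exprq : w ^+ q = w ^+ 2.
Proof. by rewrite -(prim_expr_mod w_prim) q_mod3. Qed.

Lemma fixedN1 : - 1 \in @fixed F q.
Proof. by rewrite fixedE -sub0r (frobB _ frobqD) (frob0 _ frobqD) expr1n. Qed.

Lemma fixed_expr_injP (m : nat) : (0 < m)%N ->
  {in fixed q &, injective (fun k : F => k ^+ m)} <-> coprime m (q - 1).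
Proof.
move=> m_gt0; split; last exact: coprime_fixed_expr_inj (ltnW q_gt1) m_gt0.
apply: fixed_expr_inj_coprime q_gt1 _.
by rewrite cardF -subn1 -(exp1n 2) subn_sqr dvdn_mulr.
Qed.

Lemma trsum_injectiveP (m n : nat) (c : F) : (0 < m)%N -> (0 < n)%N ->
  injective (trsum q w m n c) <->
  [/\ coprime m (q - 1), coprime n (q - 1) & c \notin fixed q].
Proof.
move=> m_gt0 n_gt0; split=> [inj_g | []]; last first.
  move=> /(fixed_expr_injP _ m_gt0) inj_m /(fixed_expr_injP _ n_gt0) inj_n c_notq.
  exact: trsum_inj frobqD frobqK _ prim3_exprq w_prim _ _ _ c_notq inj_m inj_n.
split.
- apply/(fixed_expr_injP _ m_gt0).
  exact: trsum_inj_exprl frobqD _ prim3_exprq w_prim _ _ _ n_gt0 inj_g.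
- apply/(fixed_expr_injP _ n_gt0).
  exact: trsum_inj_exprr frobqD _ prim3_exprq w_prim _ _ _ m_gt0 inj_g.
have w_notq : w \notin fixed q.
  rewrite -[w]mul1r -[w]expr1 (mul_wexpr_fixed _ _ prim3_exprq w_prim) ?oner_eq0 //.
  by rewrite fixedE expr1n.
apply: contra w_notq => cq; have [g' _ gK] := injF_bij inj_g.
by rewrite -[w]gK (trsum_fixed _ frobqD frobqK).
Qed.

Lemma fmap_permutesP (m n : nat) (s : F) (j : nat) : (0 < m)%N -> (0 < n)%N ->
  s \in fixed q -> s != 0 ->
  permutes (fmap q m n w (s * w ^+ j)) <->
  coprime (m * n) (q - 1) /\ ~~ (3 %| j%:Z + m%:Z - n%:Z)%Z.
Proof.
move=> m_gt0 n_gt0 sq s_neq0.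
have fE := fmapE _ _ prim3_exprq w_prim m n (s * w ^+ j).
have w2m_neq0 : (w ^+ 2) ^+ m != 0 by rewrite !expf_neq0 // (prim_root_eq0 w_prim).
have -> : permutes (fmap q m n w (s * w ^+ j)) <->
          injective (trsum q w m n (s * w ^+ j * w ^+ (m + 2 * n))).
  split=> [/bij_inj inj_f x y gxy | inj_g].
    by apply: inj_f; rewrite !fE /trsum in gxy *; rewrite gxy.
  by apply: injF_bij => x y; rewrite !fE => /(mulfI w2m_neq0)/inj_g.
rewrite trsum_injectiveP // -mulrA -exprD.
rewrite (mul_wexpr_fixed _ _ prim3_exprq w_prim) //.
rewrite coprimeMl; split=> [[-> -> div3] | [/andP[-> ->] div3]]; split=> //;
  by move: div3; apply: contra => ?; lia.
Qed.

End FiniteField.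

Theorem proposition3p6 (F : finFieldType) (q m n : nat) (w eps : F) :
  prime_power q -> #|F| = (q ^ 2)%N -> (q %% 3 = 2)%N ->
  (0 < m)%N -> (0 < n)%N ->
  3.-primitive_root w ->
  [/\ (eps != 0 /\ eps ^+ q = eps) ->
        (permutes (fmap q m n w eps) <->
         coprime (m * n) (q - 1) /\ ~~ (3 %| (m%:Z - n%:Z))%Z),
      (eps = w \/ eps = - w) ->
        (permutes (fmap q m n w eps) <->
         coprime (m * n) (q - 1) /\ ~~ (3 %| (1 + m%:Z - n%:Z))%Z)
    & (eps = w ^+ 2 \/ eps = - w ^+ 2) ->
        (permutes (fmap q m n w eps) <->
         coprime (m * n) (q - 1) /\ ~~ (3 %| (2 + m%:Z - n%:Z))%Z)].
Proof.
move=> q_pp cardF q_mod3 m_gt0 n_gt0 w_prim.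
have P s j := @fmap_permutesP F q w q_pp cardF q_mod3 w_prim m n s j m_gt0 n_gt0.
have fixed1 : (1 : F) \in fixed q by rewrite fixedE expr1n.
have fixedN1 := @fixedN1 F q q_pp cardF.
split.
- case=> eps_neq0 /eqP eps_fixed.
  by have := P eps 0%N eps_fixed eps_neq0; rewrite expr0 mulr1 add0r.
- by case=> ->; [have := P 1 1%N | have := P (-1) 1%N];
    rewrite ?mul1r ?mulN1r ?expr1 ?oppr_eq0 ?oner_eq0; apply.
- by case=> ->; [have := P 1 2%N | have := P (-1) 2%N];
    rewrite ?mul1r ?mulN1r ?oppr_eq0 ?oner_eq0; apply.
Qed.
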